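(* Let $H:\mathbb{R}^{2m}\to\mathbb{R}$ be smooth and let $\bar\nabla H$ be any discrete gradient of $H$. Let $$S=\begin{pmatrix}0&1\\-1&0\end{pmatrix}$$ (with $m\times m$ blocks). Let $\theta$ be a real $2m\times 2m$ matrix with $\theta^T=S^{-1}\theta S$, and let $f$ be an analytic function whose power series converges at $\theta$. Then the scheme $$y_{n+1}-y_n=f(\theta)\,S\,\bar\nabla H(y_n,y_{n+1})$$ preserves the energy integral exactly: $H(y_{n+1})=H(y_n)$.
   Context: Points are written $y=(x,p)\in\mathbb{R}^{2m}$, $y_n=(x_n,p_n)$. A discrete gradient of $H$ is an $\mathbb{R}^{2m}$-valued function $\bar\nabla H(y_n,y_{n+1})$ with components $\Delta H/\Delta y^k$ such that: - $\sum_k\frac{\Delta H}{\Delta y^k}(y^k_{n+1}-y^k_n)=H(y_{n+1})-H(y_n)$; - $\bar\nabla H(y,y)=(H_x,H_p)$. *)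

(* R : realType, points of R^{2m} are column vectors 'cV[R]_(m+m). *)
From HB Require Import structures.
From mathcomp Require Import all_boot all_order all_algebra.
From mathcomp Require Import all_classical all_reals all_analysis.
Set Implicit Arguments. Unset Strict Implicit. Unset Printing Implicit Defensive.
Import Order.TTheory GRing.Theory Num.Theory.
Import numFieldNormedType.Exports.
Local Open Scope classical_set_scope.
Local Open Scope ring_scope.

Fixpoint Ck {R : realType} {V : normedModType R} (k : nat) (f : V -> R) : Prop :=
  match k with
  | O => continuous f
  | S k' => (forall x, differentiable f x) /\ (forall v : V, Ck k' (fun x => 'D_v f x))
  end.

Definition smooth {R : realType} {V : normedModType R} (f : V -> R) : Prop :=
  forall k, Ck k f.

Definition grad {R : realType} {n : nat} (H : 'cV[R]_n -> R) (y : 'cV[R]_n) : 'cV[R]_n :=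
  \col_k ('D_(delta_mx k 0) H y).

Definition discrete_gradient {R : realType} {n : nat} (H : 'cV[R]_n -> R)
    (DG : 'cV[R]_n -> 'cV[R]_n -> 'cV[R]_n) : Prop :=
  (forall y y' : 'cV[R]_n,
      \sum_(k < n) DG y y' k 0 * (y' k 0 - y k 0) = H y' - H y) /\
  (forall y : 'cV[R]_n, DG y y = grad H y).

Definition Ssymp {R : realType} (m : nat) : 'M[R]_(m + m) :=
  block_mx 0 1%:M (- 1%:M) 0.

(* f(theta) = sum_k a_k theta^k : the power series with coefficients a converges at theta to F. *)
Definition pseries_mx_to {R : realType} {n : nat} (a : nat -> R) (theta F : 'M[R]_n) : Prop :=
  (fun N : nat => \sum_(k < N) a k *: theta ^+ k) @ \oo --> F.

From HB Require Import structures.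
From mathcomp Require Import all_boot all_order all_algebra.
From mathcomp Require Import all_classical all_reals all_analysis.
Import Order.TTheory GRing.Theory Num.Theory.
Import numFieldNormedType.Exports.
Local Open Scope ring_scope.

(* With g the discrete gradient, the scheme and the discrete gradient property give
   H(y1) - H(y0) = g^T f(theta) S g.  The condition theta^T = S^-1 theta S makes every
   theta^k S, hence every partial sum of f(theta) S, skew-symmetric, so the quadratic
   form g^T (.) g vanishes on the partial sums; being continuous, it also vanishes on
   their limit. *)

Lemma skew_quad_form0 (R : numDomainType) n (A : 'M[R]_n) (u : 'cV[R]_n) :
  A^T = - A -> u^T *m A *m u = 0.
Proof.
move=> skewA; set x := u^T *m A *m u.
have x_sym : x^T = x by rewrite [x]mx11_scalar tr_scalar_mx.
have x_skew : x^T = - x by rewrite !trmx_mul trmxK skewA mulNmx mulmxN mulmxA.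
have x00 : x 0 0 = 0.
  have : x 0 0 *+ 2 == 0 by rewrite mulr2n addr_eq0 -{1}x_sym x_skew mxE.
  by rewrite mulrn_eq0 => /eqP.
by rewrite [x]mx11_scalar x00 raddf0.
Qed.

Section SkewConjugate.
Variables (R : comUnitRingType) (n : nat) (S theta : 'M[R]_n).
Hypotheses (S_unit : S \in unitmx) (S_skew : S^T = - S).
Hypothesis theta_conj : theta^T = invmx S *m theta *m S.

Lemma skew_expmx_mul k : (theta ^+ k *m S)^T = - (theta ^+ k *m S).
Proof.
elim: k => [|k IHk]; first by rewrite expr0 mul1mx.
rewrite exprS mulmxE -mulrA -mulmxE trmx_mul IHk theta_conj mulNmx !mulmxA.
by rewrite -(mulmxA _ S) mulmxV // mulmx1 !mulmxE -exprSr -exprS.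
Qed.

Lemma skew_sum_expmx_mul (a : nat -> R) N :
  ((\sum_(k < N) a k *: theta ^+ k) *m S)^T = - ((\sum_(k < N) a k *: theta ^+ k) *m S).
Proof.
rewrite mulmx_suml raddf_sum /= -sumrN; apply: eq_bigr => k _.
by rewrite -scalemxAl linearZ /= skew_expmx_mul scalerN.
Qed.

End SkewConjugate.

Lemma mulmx_Ssymp_Ssymp (R : realType) m : Ssymp m *m Ssymp m = - 1%:M :> 'M[R]_(m + m).
Proof.
rewrite /Ssymp mulmx_block !mul0mx !mulmx0 !mulmx1 !mul1mx !addr0 !add0r.
by rewrite -!(raddfN (@scalar_mx _ _)) -scalar_mx_block.
Qed.

Lemma tr_Ssymp (R : realType) m : (Ssymp m)^T = - Ssymp m :> 'M[R]_(m + m).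
Proof. by rewrite /Ssymp tr_block_mx !trmx0 trmx1 raddfN /= trmx1 opp_block_mx !oppr0 opprK. Qed.

Lemma Ssymp_unit (R : realType) m : (Ssymp m : 'M[R]_(m + m)) \in unitmx.
Proof.
have SV : Ssymp m *m (- Ssymp m) = 1%:M :> 'M[R]_(m + m).
  by rewrite mulmxN mulmx_Ssymp_Ssymp opprK.
by case: (mulmx1_unit SV).
Qed.

Lemma cvg_mx_form {K : numFieldType} {n p : nat} (u : 'cV[K]_n) (v : 'cV[K]_p)
    {T : Type} {F : set_system T} {FF : Filter F} {M : T -> 'M[K]_(n, p)} {L : 'M[K]_(n, p)} :
  (M x @[x --> F] --> L)%classic ->
  ((u^T *m M x *m v) 0 0 @[x --> F] --> (u^T *m L *m v) 0 0)%classic.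
Proof.
have formE (N : 'M[K]_(n, p)) :
    (u^T *m N *m v) 0 0 = \sum_j \sum_i u i 0 * N i j * v j 0.
  rewrite mxE; apply: eq_bigr => j _; rewrite mxE big_distrl /=.
  by apply: eq_bigr => i _; rewrite !mxE.
move=> ML; rewrite formE (funext (fun x => formE (M x))).
apply: cvg_big => [|j _]; first exact: add_continuous.
apply: cvg_big => [|i _]; first exact: add_continuous.
apply: cvgMr_tmp; apply: cvgMl_tmp.
exact: (cvg_comp _ _ ML (@coord_continuous _ _ _ i j L)).
Qed.

Lemma discrete_gradient_increment {R : realType} {n : nat} {H : 'cV[R]_n -> R}
    {DG : 'cV[R]_n -> 'cV[R]_n -> 'cV[R]_n} (y y' : 'cV[R]_n) :
  discrete_gradient H DG -> H y' - H y = ((DG y y')^T *m (y' - y)) 0 0.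
Proof.
case=> [DG_increment _]; rewrite -DG_increment mxE.
by apply: eq_bigr => k _; rewrite !mxE.
Qed.

Theorem corollary6p7 (R : realType) (m : nat) (H : 'cV[R]_(m + m) -> R)
  (DG : 'cV[R]_(m + m) -> 'cV[R]_(m + m) -> 'cV[R]_(m + m))
  (theta : 'M[R]_(m + m)) (a : nat -> R) (ftheta : 'M[R]_(m + m))
  (y0 y1 : 'cV[R]_(m + m)) :
  smooth H ->
  discrete_gradient H DG ->
  theta^T = invmx (Ssymp m) *m theta *m Ssymp m ->
  pseries_mx_to a theta ftheta ->
  y1 - y0 = ftheta *m Ssymp m *m DG y0 y1 ->
  H y1 = H y0.
Proof.
move=> _ DG_H theta_conj ftheta_lim scheme.
set g := DG y0 y1; set S : 'M[R]_(m + m) := Ssymp m.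
have partial_sums0 N : (g^T *m (\sum_(k < N) a k *: theta ^+ k) *m (S *m g)) 0 0 = 0.
  rewrite mulmxA -(mulmxA g^T) skew_quad_form0 ?mxE //.
  exact: skew_sum_expmx_mul (Ssymp_unit R m) (tr_Ssymp R m) theta_conj a N.
have form_lim0 : (g^T *m ftheta *m (S *m g)) 0 0 = 0.
  have := cvg_mx_form g (S *m g) (FF := eventually_filter) ftheta_lim.
  by rewrite (funext partial_sums0) => lim0; exact: (cvg_unique _ lim0 (cvg_cst 0)).
apply/eqP; rewrite -subr_eq0 (discrete_gradient_increment y0 y1 DG_H).
by rewrite scheme -/g -/S -mulmxA mulmxA form_lim0.
Qed.
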